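(* Let $(\vdash,\overline{\cdot},\widehat{\cdot})$ be a setting and let $\vdash^{\emptyset}$ be the restriction of $\vdash$ to those pairs $(\Gamma,\gamma)$ for which there is no $(\emptyset,\delta)\in{\vdash}$ with $\delta\in\overline{\psi}$ for some $\psi\in\widehat{\Gamma}$. Then for $\mathsf{Sem}\in\{\mathsf{Grd},\mathsf{Prf}\}$, every $\mathcal{S}\subseteq\mathcal{L}$ and every $\phi$: $\mathcal{S}\mathrel{\mid\!\sim}^{(\vdash,\overline{\cdot},\widehat{\cdot})}_{\mathsf{Sem}}\phi$ iff $\mathcal{S}\mathrel{\mid\!\sim}^{(\vdash^{\emptyset},\overline{\cdot},\widehat{\cdot})}_{\mathsf{Sem}}\phi$.
   Context: $\mathcal{L}$ is a set of formulas; $\wp_{\sf fin}(X)$ is the set of finite subsets of $X$. A setting is a triple $(\vdash,\overline{\cdot},\widehat{\cdot})$ with ${\vdash}\subseteq\wp_{\sf fin}(\mathcal{L})\times\mathcal{L}$ arbitrary, $\overline{\cdot}:\mathcal{L}\to\wp(\mathcal{L})$, and $\widehat{\cdot}$ assigning to each nonempty finite set of formulas a finite set of formulas, with $\widehat{\emptyset}=\emptyset$ (so arguments with empty support have no attackers). For $\mathcal{S}\subseteq\mathcal{L}$, $\mathit{Arg}_{\vdash}(\mathcal{S})=\{(\Gamma,\gamma):\Gamma\subseteq\mathcal{S}\text{ finite},\Gamma\vdash\gamma\}$; $\mathsf{Conc}((\Gamma,\gamma))=\gamma$. In $\mathcal{AF}_{\vdash}(\mathcal{S})$, $(\Gamma,\gamma)$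 attacks $(\Gamma',\gamma')$ iff $\gamma\in\overline{\phi}$ for some $\phi\in\widehat{\Gamma'}$. Dung semantics on $\mathit{Arg}_{\vdash}(\mathcal{S})$: conflict-free, defends (every attacker is attacked by a member), admissible (conflict-free and defends its members), complete (admissible and contains all it defends), preferred ($\subseteq$-maximal complete), grounded ($\subseteq$-minimal complete). $\mathcal{S}\mathrel{\mid\!\sim}^{\mathcal{AF}}_{\mathsf{Sem}}\phi$ iff every $\mathsf{Sem}$-extension of $\mathcal{AF}(\mathcal{S})$ contains an argument with conclusion $\phi$. *)

From HB Require Import structures.
From mathcomp Require Import all_boot finmap.
Set Implicit Arguments. Unset Strict Implicit. Unset Printing Implicit Defensive.
Local Open Scope fset_scope.

Section AF.
Variable A : Type.
Variable args : A -> Prop.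
Variable att : A -> A -> Prop.      (* attack relation, restricted to args *)

Definition ext_in (E : A -> Prop) := forall a, E a -> args a.
Definition conflict_free (E : A -> Prop) :=
  forall a b, E a -> E b -> ~ att a b.
Definition defends (E : A -> Prop) (a : A) :=
  forall b, args b -> att b a -> exists2 c, E c & att c b.
Definition admissible (E : A -> Prop) :=
  ext_in E /\ conflict_free E /\ (forall a, E a -> defends E a).
Definition complete (E : A -> Prop) :=
  admissible E /\ (forall a, args a -> defends E a -> E a).
Definition subsetP (E F : A -> Prop) := forall a, E a -> F a.
Definition grounded (E : A -> Prop) :=
  complete E /\ (forall F, complete F -> subsetP F E -> subsetP E F).
Definition preferred (E : A -> Prop) :=
  complete E /\ (forall F, complete F -> subsetP E F -> subsetP F E).
End AF.

Inductive semantics := Grd | Prf.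

Definition sem_ext (s : semantics) A (args : A -> Prop) (att : A -> A -> Prop)
  (E : A -> Prop) : Prop :=
  match s with
  | Grd => grounded args att E
  | Prf => preferred args att E
  end.

Section Setting.
Variable L : choiceType.
Variable vdash : {fset L} -> L -> Prop.
Variable bar : L -> L -> Prop.      (* bar phi delta  <->  delta \in overline(phi) *)
Variable hat : {fset L} -> {fset L}. (* with hat fset0 = fset0 (hypothesis) *)

Definition argument : Type := ({fset L} * L)%type.

Definition Arg (S : L -> Prop) (a : argument) : Prop :=
  (forall x, x \in a.1 -> S x) /\ vdash a.1 a.2.

Definition attacks (S : L -> Prop) (a b : argument) : Prop :=
  Arg S a /\ Arg S b /\ exists2 phi, phi \in hat b.1 & bar phi a.2.

Definition entails (s : semantics) (S : L -> Prop) (phi : L) : Prop :=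
  forall E : argument -> Prop, sem_ext s (Arg S) (attacks S) E ->
    exists2 a, E a & a.2 = phi.
End Setting.

Definition vdash_empty (L : choiceType) (vdash : {fset L} -> L -> Prop)
  (bar : L -> L -> Prop) (hat : {fset L} -> {fset L}) : {fset L} -> L -> Prop :=
  fun G g => vdash G g /\
    ~ (exists delta, vdash fset0 delta /\ exists2 psi, psi \in hat G & bar psi delta).

(* Premiseless arguments (∅, δ) have no attackers, since hat ∅ = ∅, so they
   belong to every complete extension.  The arguments discarded by ⊢^∅ are
   exactly those attacked by such a premiseless argument: they can never be
   accepted and they are always counter-attacked.  Hence both frameworks have
   the same complete extensions, and therefore the same grounded and the same
   preferred extensions. *)
From mathcomp Require Import all_boot finmap.
From Stdlib Require Classical_Prop.
Local Open Scope fset_scope.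

Set Implicit Arguments.

Lemma complete_unattacked A (args : A -> Prop) (att : A -> A -> Prop) E a :
  complete args att E -> args a -> (forall b, ~ att b a) -> E a.
Proof. by move=> [_ closedE] argsa unatt_a; apply: closedE => // b _ /unatt_a. Qed.

Lemma sem_ext_complete_iff s A (args1 args2 : A -> Prop) (att1 att2 : A -> A -> Prop) :
  (forall E, complete args1 att1 E <-> complete args2 att2 E) ->
  forall E, sem_ext s args1 att1 E <-> sem_ext s args2 att2 E.
Proof.
move=> eq_complete E; case: s => /=; rewrite /grounded /preferred.
- by split=> -[/eq_complete cE minE]; split=> // F /eq_complete; apply: minE.
- by split=> -[/eq_complete cE maxE]; split=> // F /eq_complete; apply: maxE.
Qed.

Section RestrictedFramework.
Variables (A : Type) (args1 args2 : A -> Prop) (att1 att2 : A -> A -> Prop).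
Variable U : A -> Prop.
Hypothesis args2_sub : forall a, args2 a -> args1 a.
Hypothesis att2E : forall a b, att2 a b <-> [/\ args2 a, args2 b & att1 a b].
Hypothesis U_args2 : forall u, U u -> args2 u.
Hypothesis U_unattacked : forall b u, U u -> ~ att1 b u.
Hypothesis args1_cover :
  forall a, args1 a -> args2 a \/ exists2 u, U u & att1 u a.

Lemma att2_att1 a b : att2 a b -> att1 a b.
Proof. by case/att2E. Qed.

Lemma att1_att2 a b : args2 a -> args2 b -> att1 a b -> att2 a b.
Proof. by move=> args2a args2b att_ab; apply/att2E. Qed.

Lemma complete1_U E u : complete args1 att1 E -> U u -> E u.
Proof.
move=> cE Uu; apply: complete_unattacked cE _ _; first exact/args2_sub/U_args2.
by move=> b; apply: U_unattacked.
Qed.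

Lemma complete2_U E u : complete args2 att2 E -> U u -> E u.
Proof.
move=> cE Uu; apply: complete_unattacked cE (U_args2 Uu) _.
by move=> b /att2_att1; apply: U_unattacked.
Qed.

Lemma complete1_in_args2 E : complete args1 att1 E -> forall a, E a -> args2 a.
Proof.
move=> cE a Ea; have [[inE [cfE _]] _] := cE.
have [//|[u Uu att_ua]] := args1_cover (inE a Ea).
by case: (cfE u a (complete1_U cE Uu) Ea).
Qed.

Lemma complete1_complete2 E : complete args1 att1 E -> complete args2 att2 E.
Proof.
move=> cE; have [[inE [cfE defE]] closedE] := cE.
have inE2 := complete1_in_args2 cE.
split; first split; [|split|].
- exact: inE2.
- by move=> a b Ea Eb /att2_att1; apply: cfE.
- move=> a Ea b args2b /att2E[_ _ att_ba].
  have [c Ec att_cb] := defE a Ea b (args2_sub args2b) att_ba.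
  by exists c => //; apply: att1_att2 (inE2 c Ec) args2b att_cb.
- move=> a args2a def2a; apply: closedE (args2_sub args2a) _ => b args1b att_ba.
  have [args2b|[u Uu att_ub]] := args1_cover args1b.
    have att2_ba := att1_att2 args2b args2a att_ba.
    by have [c Ec /att2_att1 att_cb] := def2a b args2b att2_ba; exists c.
  by exists u => //; apply: complete1_U.
Qed.

Lemma complete2_complete1 E : complete args2 att2 E -> complete args1 att1 E.
Proof.
move=> cE; have [[inE [cfE defE]] closedE] := cE.
split; first split; [|split|].
- by move=> a /inE /args2_sub.
- by move=> a b Ea Eb /(att1_att2 (inE a Ea) (inE b Eb)); apply: cfE.
- move=> a Ea b args1b att_ba; have [args2b|[u Uu att_ub]] := args1_cover args1b.
    have att2_ba := att1_att2 args2b (inE a Ea) att_ba.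
    by have [c Ec /att2_att1 att_cb] := defE a Ea b args2b att2_ba; exists c.
  by exists u => //; apply: complete2_U.
- move=> a args1a def1a.
  have args2a : args2 a.
    have [//|[u Uu att_ua]] := args1_cover args1a.
    have [c _ att_cu] := def1a u (args2_sub (U_args2 Uu)) att_ua.
    by case: (U_unattacked Uu att_cu).
  apply: closedE args2a _ => b args2b /att2_att1 att_ba.
  have [c Ec att_cb] := def1a b (args2_sub args2b) att_ba.
  by exists c => //; apply: att1_att2 (inE c Ec) args2b att_cb.
Qed.

Lemma complete_restrict_iff E : complete args1 att1 E <-> complete args2 att2 E.
Proof. by split; [apply: complete1_complete2 | apply: complete2_complete1]. Qed.

End RestrictedFramework.

Section PremiselessArguments.
Variables (L : choiceType) (vdash : {fset L} -> L -> Prop)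
  (bar : L -> L -> Prop) (hat : {fset L} -> {fset L}) (S : L -> Prop).
Hypothesis hat0 : hat fset0 = fset0.

Let vdash0 := vdash_empty vdash bar hat.

Definition premiseless (a : argument L) := a.1 = fset0 /\ vdash fset0 a.2.

Lemma Arg_vdash_empty a : Arg vdash0 S a -> Arg vdash S a.
Proof. by case=> inS [vd _]; split. Qed.

Lemma attacks_vdash_empty a b :
  attacks vdash0 bar hat S a b <->
  [/\ Arg vdash0 S a, Arg vdash0 S b & attacks vdash bar hat S a b].
Proof.
split=> [[Aa [Ab att_ab]] | [Aa Ab [_ [_ att_ab]]]]; last by split.
by split=> //; split; [|split]; rewrite ?att_ab //; apply: Arg_vdash_empty.
Qed.

Lemma premiseless_Arg_vdash_empty a : premiseless a -> Arg vdash0 S a.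
Proof.
case: a => [G d] [/= -> vd]; split=> [x|]; first by rewrite in_fset0.
by split=> // -[delta [_ [psi]]] /=; rewrite hat0 in_fset0.
Qed.

Lemma premiseless_unattacked b a : premiseless a -> ~ attacks vdash bar hat S b a.
Proof. by case=> G0 _ [_ [_ [psi]]]; rewrite G0 hat0 in_fset0. Qed.

Lemma Arg_vdash_cover a : Arg vdash S a ->
  Arg vdash0 S a \/ exists2 u, premiseless u & attacks vdash bar hat S u a.
Proof.
move=> [inS vd]; have [[delta [vd0 [psi psi_hat bar_psi]]] | no_att] :=
  Classical_Prop.classic (exists delta, vdash fset0 delta /\
    exists2 psi, psi \in hat a.1 & bar psi delta); last by left.
right; exists (fset0, delta) => //; split; last by split=> //; exists psi.
by split=> // x; rewrite in_fset0.
Qed.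

Lemma complete_vdash_empty_iff E :
  complete (Arg vdash S) (attacks vdash bar hat S) E <->
  complete (Arg vdash0 S) (attacks vdash0 bar hat S) E.
Proof.
exact: (@complete_restrict_iff _ _ _ _ _ premiseless Arg_vdash_empty
  attacks_vdash_empty premiseless_Arg_vdash_empty premiseless_unattacked
  Arg_vdash_cover).
Qed.

End PremiselessArguments.

Unset Implicit Arguments.

Theorem lemma1 (L : choiceType) (vdash : {fset L} -> L -> Prop)
  (bar : L -> L -> Prop) (hat : {fset L} -> {fset L})
  (hat0 : hat fset0 = fset0)
  (s : semantics) (S : L -> Prop) (phi : L) :
  entails vdash bar hat s S phi <->
  entails (vdash_empty vdash bar hat) bar hat s S phi.
Proof.
have eq_sem := sem_ext_complete_iff s (@complete_vdash_empty_iff L vdash bar hat S hat0).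
by split=> entails_phi E /eq_sem semE; apply: entails_phi.
Qed.
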